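(* Let $n$ be a positive integer, let $\mathfrak A=(A_1,\dots,A_k)$ be an ordered partition of $[n]$ into nonempty blocks with length-vector $(\ell_1,\dots,\ell_{k-1})=(|A_1|,\dots,|A_{k-1}|)$, and let $\mathbf a\colon[n]\to[n]$ be such that $\operatorname{coim}(\mathbf a)=\mathfrak A$. Then $\mathbf a$ is a parking function if and only if $\operatorname{rim}(\mathbf a)\in\langle\ell_1,\dots,\ell_{k-1}\rangle$; and $\mathbf a$ is a parking function with $\operatorname{run}(\mathbf a)=r$ if and only if $\operatorname{rim}(\mathbf a)=(0,1,\dots,r-1,x_{r+1},\dots,x_k)$ for some integers $x_{r+1},\dots,x_k$ with $$(0,x_{r+1}-r,\dots,x_k-r)\in\Big\langle \Big(\sum_{i=1}^r\ell_i\Big)-r,\ \ell_{r+1},\dots,\ell_{k-1}\Big\rangle.$$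
   Context: Let $[n]=\{1,\dots,n\}$. A parking function of length $n$ is $\mathbf a=(a_1,\dots,a_n)\in[n]^n$ with $|\{j:a_j\le i\}|\ge i$ for every $i\in[n]$. If $1\in\{a_1,\dots,a_n\}$, $\operatorname{run}(\mathbf a)=\max\{i\in[n]:[i]\subseteq\{a_1,\dots,a_n\}\}$; otherwise $\operatorname{run}(\mathbf a)=0$. If $\{a_1,\dots,a_n\}=\{x_1<\dots<x_k\}$, the reduced image is $\operatorname{rim}(\mathbf a)=(x_1-1,\dots,x_k-1)$, and the coimage $\operatorname{coim}(\mathbf a)$ is the set of fibers $\mathbf a^{-1}(\{x_j\})$, ordered by increasing value $x_j$, viewed as an ordered partition of $[n]$. For integers $\ell_1,\dots,\ell_m$ with partial sums $L_i=\ell_1+\dots+\ell_i$, $\langle\ell_1,\dots,\ell_m\rangle=\{(x_0,\dots,x_m)\in\mathbb Z^{m+1}: x_0=0,\ x_{i-1}<x_i\le L_i\ \forall\, 1\le i\le m\}$. *)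

From HB Require Import structures.
From mathcomp Require Import all_boot all_order all_algebra.
From mathcomp Require Import finmap.
Set Implicit Arguments. Unset Strict Implicit. Unset Printing Implicit Defensive.
Import Order.TTheory GRing.Theory Num.Theory.
Local Open Scope fset_scope.
Local Open Scope ring_scope.
Local Open Scope nat_scope.

(* [n] = {1,...,n} is represented by iota 1 n; a map a : [n] -> [n] is a
   function nat -> nat whose values outside [n] are irrelevant. *)

Definition parking (n : nat) (a : nat -> nat) : Prop :=
  (forall j, 1 <= j <= n -> 1 <= a j <= n) /\
  (forall i, 1 <= i <= n -> i <= count (fun j => a j <= i) (iota 1 n)).

Definition img (n : nat) (a : nat -> nat) : seq nat :=
  sort leq (undup [seq a j | j <- iota 1 n]).

Definition run (n : nat) (a : nat -> nat) : nat :=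
  if 1 \in img n a then
    \max_(1 <= i < n.+1 | all (fun t => t \in img n a) (iota 1 i)) i
  else 0.

Definition rim (n : nat) (a : nat -> nat) : seq int :=
  [seq (x%:Z - 1)%R | x <- img n a].

Definition coim (n : nat) (a : nat -> nat) : seq {fset nat} :=
  [seq [fset j | j in [seq j <- iota 1 n | a j == x]] | x <- img n a].

Definition ordered_partition (n : nat) (A : seq {fset nat}) : Prop :=
  all (fun B => B != fset0) A /\
  pairwise (fun B C => [disjoint B & C]) A /\
  (forall j, (1 <= j <= n) = has (fun B => j \in B) A).

Definition lenvec (A : seq {fset nat}) : seq int :=
  [seq (#|` B|)%:Z | B <- take (size A).-1 A].

Definition in_bracket (l : seq int) (x : seq int) : Prop :=
  size x = (size l).+1 /\ nth 0%R x 0 = 0%R /\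
  (forall i, 1 <= i <= size l ->
     (nth 0%R x i.-1 < nth 0%R x i)%R /\
     (nth 0%R x i <= \sum_(j < i) nth 0%R l j)%R).

From HB Require Import structures.
From mathcomp Require Import all_boot all_order all_algebra.
From mathcomp Require Import finmap.
From mathcomp Require Import zify.
Import Order.TTheory GRing.Theory Num.Theory.
Set Implicit Arguments. Unset Strict Implicit. Unset Printing Implicit Defensive.

(* Let x_1 < ... < x_k be the image of a and let L_m be the number of j with
   a_j in {x_1, ..., x_m}, i.e. the m-th partial sum of the length vector of
   the coimage.  Since #{j | a_j <= t} = L_m for x_m <= t < x_(m+1), a is a
   parking function iff x_(m+1) <= L_m + 1 for every m < k, which is the upper
   half of rim(a) in <l_1, ..., l_(k-1)>; the lower half, strict increase of
   rim(a), is automatic.  Moreover run(a) = r iff x_i = i for i <= r and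
   x_(r+1) <> r + 1.  The inequalities with m < r then hold for free, because
   every fibre is nonempty (L_m >= m), and the remaining ones are exactly the
   bracket condition for the last k - r entries of rim(a) shifted down by r. *)

Lemma count_path_min (p : pred nat) y s :
  path ltn y s -> (forall x, y < x -> ~~ p x) -> count p s = 0.
Proof.
move=> /(order_path_min ltn_trans) /allP lt_y not_p.
by apply/eqP; rewrite -leqn0 leqNgt -has_count; apply/hasP => -[x /lt_y/not_p/negP].
Qed.

Lemma count_lt_nth s m :
  sorted ltn s -> m < size s -> count (fun x => x < nth 0 s m) s = m.
Proof.
elim: s m => [|y s IH] [|m] //= s_incr lt_m.
  by rewrite ltnn (count_path_min s_incr) // => x /ltnW; rewrite -leqNgt.
have /allP lt_y := order_path_min ltn_trans s_incr.
by rewrite lt_y ?mem_nth // IH //; exact: path_sorted s_incr.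
Qed.

Lemma filter_leq_sorted s t :
  sorted ltn s -> [seq x <- s | x <= t] = take (count (fun x => x <= t) s) s.
Proof.
elim: s => [|y s IH] //= s_incr; rewrite IH ?(path_sorted s_incr) //.
case: leqP => [_ | lt_ty] //.
by rewrite (count_path_min s_incr) ?take0 // => x lt_yx; rewrite -ltnNge; lia.
Qed.

Lemma lt_nth_count_leq s t :
  sorted ltn s -> count (fun x => x <= t) s < size s ->
  t < nth 0 s (count (fun x => x <= t) s).
Proof.
elim: s => [|y s IH] //= s_incr; case: (leqP y t) => [_ | lt_ty].
  exact: IH (path_sorted s_incr).
by rewrite (count_path_min s_incr) // => x lt_yx; rewrite -ltnNge; lia.
Qed.

Lemma index_lt_nth s j :
  sorted ltn s -> all (fun x => 0 < x) s -> j < size s -> j < nth 0 s j.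
Proof.
move=> s_incr /allP s_pos; elim: j => [|j IH] lt_j; first exact/s_pos/mem_nth.
have := sorted_ltn_nth ltn_trans 0 s_incr j j.+1 (ltnW lt_j) lt_j (ltnSn j).
by have := IH (ltnW lt_j); lia.
Qed.

Lemma iotaSr m r : iota m r.+1 = rcons (iota m r) (m + r).
Proof. by rewrite -cats1 -addn1 iotaD. Qed.

Lemma take_iota_mem s r :
  sorted ltn s -> all (fun x => 0 < x) s ->
  (take r s == iota 1 r) = all (fun t => t \in s) (iota 1 r).
Proof.
move=> s_incr s_pos; apply/idP/idP => [/eqP take_r | ].
  by apply/allP => t; rewrite -take_r => /mem_take.
elim: r => [|r IH]; first by rewrite take0.
rewrite iotaSr all_rcons add1n => /andP[r1_in /IH/eqP take_r].
have lt_p : index r.+1 s < size s by rewrite index_mem.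
have nth_p : nth 0 s (index r.+1 s) = r.+1 := nth_index 0 r1_in.
have p_eq : index r.+1 s = r.
  have := index_lt_nth s_incr s_pos lt_p; rewrite nth_p ltnS leq_eqVlt.
  case/orP=> [/eqP // | lt_pr].
  by move: nth_p; rewrite -(nth_take 0 lt_pr) take_r nth_iota //; lia.
rewrite p_eq in lt_p nth_p.
by rewrite (take_nth 0 lt_p) take_r nth_p.
Qed.

Lemma count_comp_fibres (I : eqType) (T : eqType) (f : I -> T) (l : seq I)
    (s : seq T) (P : pred T) :
  uniq s -> {in l, forall j, f j \in s} ->
  count (fun j => P (f j)) l = \sum_(x <- s | P x) count (fun j => f j == x) l.
Proof.
move=> s_uniq; elim: l => [|j l IH] f_in /=; first by rewrite big1.
rewrite big_split /= IH => [|i il]; last by apply: f_in; rewrite inE il orbT.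
congr (_ + _); rewrite big_mkcond (bigD1_seq (f j)) ?f_in ?mem_head //=.
rewrite big1 ?addn0 ?eqxx; first by case: (P (f j)).
by move=> i /negbTE ne_i; rewrite eq_sym ne_i; case: (P i).
Qed.

Lemma bigmax_downward_closed (P : pred nat) n r :
  P 0 -> (forall i j, i <= j -> P j -> P i) -> r < n ->
  (\max_(1 <= i < n.+1 | P i) i = r) <-> P r /\ ~~ P r.+1.
Proof.
move=> P0 P_down lt_rn; set M := \max_(_ <= i < _ | _) _.
have PM : P M.
  apply: (big_ind P) => // x y Px Py.
  by rewrite /maxn; case: ifP.
have le_M i : 0 < i <= n -> P i -> i <= M.
  by move=> i_range; apply: leq_bigmax_seq; rewrite mem_index_iota.
split=> [M_r | [Pr nPr1]].
  subst r; split=> //; apply/negP => PM1.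
  have M1_range : 0 < M.+1 <= n by lia.
  by have := le_M _ M1_range PM1; rewrite ltnn.
apply/eqP; rewrite eqn_leq; apply/andP; split.
  by rewrite leqNgt; apply/negP => lt_rM; move: nPr1; rewrite (P_down _ M).
by case: r Pr lt_rn {nPr1} => // r Pr lt_rn; apply: le_M => //; lia.
Qed.

Lemma sum_nth_take (R : nmodType) (t : seq R) m :
  m <= size t -> (\sum_(j < m) nth 0 t j = \sum_(x <- take m t) x)%R.
Proof.
move=> le_m; rewrite [RHS](big_nth 0%R) size_takel // big_mkord.
by apply: eq_bigr => i _; rewrite nth_take.
Qed.

Section BracketShift.
Local Open Scope ring_scope.

Lemma in_bracket_shift (l y : seq int) r :
  size y = (size l).+1 -> (r < size y)%N ->
  (forall m, (0 < m < size y)%N -> y`_m.-1 < y`_m) ->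
  in_bracket ((\sum_(i < r) l`_i - r%:Z) :: drop r l)
             (0 :: [seq x - r%:Z | x <- drop r y]) <->
  r%:Z < y`_r /\ (forall m, (r <= m < size y)%N -> y`_m <= \sum_(i < m) l`_i).
Proof.
move=> size_y lt_r y_incr.
set l' := _ :: drop r l; set y' := 0 :: _.
have size_l' : size l' = (size y - r)%N by rewrite /= size_drop; lia.
have size_y' : size y' = (size l').+1 by rewrite size_l' /= size_map size_drop.
have y'0 : y'`_0 = 0 by [].
have y'S j : (j < size y - r)%N -> y'`_j.+1 = y`_(r + j) - r%:Z.
  by move=> lt_j; rewrite /= (nth_map 0) ?size_drop // nth_drop.
have sum_l' j : \sum_(i < j.+1) l'`_i = \sum_(i < r + j) l`_i - r%:Z.
  rewrite big_ord_recl big_split_ord /= addrAC.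
  by congr (_ + _ - _); apply: eq_bigr => i _; rewrite nth_drop.
rewrite /in_bracket size_y' y'0 size_l'.
split=> [[_ [_ bracket]] | [lt_ry bounds]].
  split.
    by have [+ _] := bracket 1%N ltac:(lia); rewrite y'0 y'S ?addn0; lia.
  move=> m /andP[le_rm lt_m].
  have [_] := bracket (m - r).+1%N ltac:(lia).
  by rewrite sum_l' y'S ?subnKC //; lia.
split=> //; split=> // -[|j] // /andP[_ le_j].
rewrite succnK sum_l' y'S; last by lia.
split; last by have := bounds (r + j)%N ltac:(lia); lia.
case: j le_j => [|j] le_j; first by rewrite y'0 addn0; lia.
rewrite y'S; last by lia.
by have := y_incr (r + j.+1)%N ltac:(lia); rewrite addnS succnK; lia.
Qed.

End BracketShift.

Lemma cat_exists_take_drop (T : Type) (y p : seq T) (P : seq T -> Prop) k r :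
  size y = k -> size p = r ->
  (exists xs, size xs = k - r /\ y = p ++ xs /\ P xs) <->
  take r y = p /\ P (drop r y).
Proof.
move=> <- <-; split=> [[xs [_ [-> Pxs]]] | [take_y Py]].
  by rewrite take_size_cat // drop_size_cat.
exists (drop (size p) y); rewrite size_drop; split=> //; split=> //.
by rewrite -{1}(cat_take_drop (size p) y) take_y.
Qed.

Section ParkingFunctions.
Variables (n : nat) (a : nat -> nat).
Hypothesis a_range : forall j, 1 <= j <= n -> 1 <= a j <= n.

Local Notation s := (img n a).
Local Notation fibre_size x := (count (fun j => a j == x) (iota 1 n)).

Definition fibre_sum m := \sum_(x <- take m s) fibre_size x.

Lemma img_sorted : sorted ltn s.
Proof.
by rewrite ltn_sorted_uniq_leq sort_uniq undup_uniq sort_sorted //; exact: leq_total.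
Qed.

Lemma img_uniq : uniq s.
Proof. by rewrite sort_uniq undup_uniq. Qed.

Lemma mem_img x : (x \in s) = (x \in [seq a j | j <- iota 1 n]).
Proof. by rewrite mem_sort mem_undup. Qed.

Lemma img_range x : x \in s -> 1 <= x <= n.
Proof.
by rewrite mem_img => /mapP[j]; rewrite mem_iota => j_range ->; apply: a_range; lia.
Qed.

Lemma img_pos : all (fun x => 0 < x) s.
Proof. by apply/allP => x /img_range /andP[]. Qed.

Lemma a_in_img j : j \in iota 1 n -> a j \in s.
Proof. by move=> j_in; rewrite mem_img map_f. Qed.

Lemma size_img_gt0 : 0 < n -> 0 < size s.
Proof.
move=> n_gt0; have : a 1 \in s by apply: a_in_img; rewrite mem_iota; lia.
by case: (s).
Qed.

Lemma size_img_leq : size s <= n.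
Proof.
have img_sub : {subset s <= iota 1 n}.
  by move=> x /img_range; rewrite mem_iota; lia.
by have := uniq_leq_size img_uniq img_sub; rewrite size_iota.
Qed.

Lemma fibre_size_gt0 x : x \in s -> 0 < fibre_size x.
Proof.
by rewrite mem_img => /mapP[j j_in ->]; rewrite -has_count; apply/hasP; exists j.
Qed.

Lemma count_leq_fibre_sum t :
  count (fun j => a j <= t) (iota 1 n) = fibre_sum (count (fun x => x <= t) s).
Proof.
rewrite (count_comp_fibres (fun x => x <= t) img_uniq a_in_img).
by rewrite -big_filter filter_leq_sorted // img_sorted.
Qed.

Lemma fibre_sum_size : fibre_sum (size s) = n.
Proof.
have := count_comp_fibres xpredT img_uniq a_in_img.
by rewrite count_predT size_iota /fibre_sum take_size.
Qed.

Lemma fibre_sum_geq m : m <= size s -> m <= fibre_sum m.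
Proof.
move=> le_m; rewrite -[m in m <= _](size_takel le_m) -sum1_size /fibre_sum !big_seq.
by apply: leq_sum => x /mem_take /fibre_size_gt0.
Qed.

Lemma parkingE :
  parking n a <-> forall m, m < size s -> nth 0 s m <= fibre_sum m + 1.
Proof.
split=> [[_ park] m lt_m | bounds].
  have /andP[x_pos x_le] : 1 <= nth 0 s m <= n := img_range (mem_nth 0 lt_m).
  have count_m : count (fun y => y <= (nth 0 s m).-1) s = m.
    rewrite -[RHS](count_lt_nth img_sorted lt_m).
    by apply: eq_count => y /=; apply/idP/idP; lia.
  have [x_le1 | lt1x] := leqP (nth 0 s m) 1; first by lia.
  by have := park (nth 0 s m).-1 ltac:(lia); rewrite count_leq_fibre_sum count_m; lia.
split=> // t t_range; rewrite count_leq_fibre_sum.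
have := count_size (fun x => x <= t) s; rewrite leq_eqVlt => /orP[/eqP -> | lt_c].
  by rewrite fibre_sum_size; lia.
by have := lt_nth_count_leq img_sorted lt_c; have := bounds _ lt_c; lia.
Qed.

Lemma size_coim : size (coim n a) = size s.
Proof. by rewrite size_map. Qed.

Lemma lenvec_coim :
  lenvec (coim n a) = [seq ((fibre_size x)%:Z)%R | x <- take (size s).-1 s].
Proof.
rewrite /lenvec size_coim /coim -map_take -map_comp; apply: eq_map => x /=.
by rewrite card_fseq undup_id ?filter_uniq ?iota_uniq // size_filter.
Qed.

Lemma size_lenvec_coim : size (lenvec (coim n a)) = (size s).-1.
Proof. by rewrite lenvec_coim size_map size_takel // leq_pred. Qed.

Lemma sum_lenvec_coim m : m <= (size s).-1 ->
  (\sum_(i < m) nth 0 (lenvec (coim n a)) i = (fibre_sum m)%:Z)%R.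
Proof.
move=> le_m; rewrite sum_nth_take ?size_lenvec_coim // lenvec_coim -map_take.
by rewrite take_takel // big_map /fibre_sum (big_morph Posz PoszD (erefl (Posz 0))).
Qed.

Lemma size_rim : size (rim n a) = size s.
Proof. by rewrite size_map. Qed.

Lemma nth_rim i : i < size s -> nth 0%R (rim n a) i = ((nth 0%N s i)%:Z - 1)%R.
Proof. by move=> lt_i; rewrite (nth_map 0). Qed.

Lemma rim_incr m : 0 < m < size s -> (nth 0 (rim n a) m.-1 < nth 0 (rim n a) m)%R.
Proof.
move=> /andP[m_pos lt_m]; rewrite !nth_rim //; last by lia.
have : nth 0 s m.-1 < nth 0 s m.
  by apply: (sorted_ltn_nth ltn_trans 0 img_sorted); rewrite ?inE //; lia.
by lia.
Qed.

Lemma rim_leq_sum_lenvec m : m < size s ->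
  (nth 0 (rim n a) m <= \sum_(i < m) nth 0 (lenvec (coim n a)) i)%R =
  (nth 0 s m <= fibre_sum m + 1).
Proof.
by move=> lt_m; rewrite nth_rim // sum_lenvec_coim; [apply/idP/idP; lia | lia].
Qed.

Lemma parking_in_bracket :
  0 < n -> (parking n a <-> in_bracket (lenvec (coim n a)) (rim n a)).
Proof.
move=> /size_img_gt0 k_gt0.
have s0_pos : 0 < nth 0 s 0 by have /allP := img_pos; apply; exact: mem_nth.
have fibre_sum0 : fibre_sum 0 = 0 by rewrite /fibre_sum take0 big_nil.
rewrite parkingE /in_bracket size_rim size_lenvec_coim prednK //.
split=> [bounds | [_ [rim0 bracket]] [|m] lt_m].
- split=> //; split=> [|i /andP[i_pos le_i]].
    by have := bounds 0 k_gt0; rewrite nth_rim // fibre_sum0; lia.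
  split; first by apply: rim_incr; lia.
  by rewrite rim_leq_sum_lenvec; [apply: bounds | ]; lia.
- by move: rim0; rewrite nth_rim // fibre_sum0; lia.
- by have [_] := bracket m.+1 ltac:(lia); rewrite rim_leq_sum_lenvec.
Qed.

Lemma run_max :
  run n a = \max_(1 <= i < n.+1 | all (fun t => t \in s) (iota 1 i)) i.
Proof.
rewrite /run; case: ifP => // s1; apply/esym/big1_seq => i /andP[all_i].
rewrite mem_index_iota => i_range.
have : 1 \in iota 1 i by rewrite mem_iota; lia.
by move/(allP all_i); rewrite s1.
Qed.

Lemma run_spec r : r < size s ->
  run n a = r <-> take r s = iota 1 r /\ nth 0 s r != r.+1.
Proof.
move=> lt_r; rewrite run_max bigmax_downward_closed //; first last.
- by have := size_img_leq; lia.
- by move=> i j le_ij; rewrite -(subnKC le_ij) iotaD all_cat => /andP[].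
rewrite -!take_iota_mem ?img_sorted ?img_pos // (take_nth 0 lt_r) iotaSr.
rewrite eqseq_rcons add1n.
by split=> [[/eqP -> /=] | [-> ne_r]]; rewrite ?eqxx.
Qed.

Lemma parking_run r : r < size s ->
  (parking n a /\ run n a = r) <->
  take r s = iota 1 r /\ r.+1 < nth 0 s r /\
  forall m, r <= m < size s -> nth 0 s m <= fibre_sum m + 1.
Proof.
move=> lt_r; rewrite parkingE run_spec //.
split=> [[bounds [take_r ne_r]] | [take_r [lt_sr bounds]]].
  split=> //; split=> [|m /andP[_]]; last exact: bounds.
  by have := index_lt_nth img_sorted img_pos lt_r; lia.
split; last by split=> //; lia.
move=> m lt_m; case: (ltnP m r) => [lt_mr | le_rm]; last by apply: bounds; lia.
rewrite -(nth_take 0 lt_mr) take_r nth_iota //.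
by have := fibre_sum_geq (ltnW lt_m); lia.
Qed.

Lemma take_rim_iota r :
  take r (rim n a) = [seq (i%:Z)%R | i <- iota 0 r] <-> take r s = iota 1 r.
Proof.
have dec_inj : injective (fun x : nat => (x%:Z - 1)%R) by move=> x y; lia.
have -> : [seq (i%:Z)%R | i <- iota 0 r] = [seq (x%:Z - 1)%R | x <- iota 1 r].
  by rewrite -[1]addn0 iotaDl -map_comp; apply: eq_map => i /=; lia.
by rewrite /rim -map_take; split=> [/(inj_map dec_inj) | ->].
Qed.

Lemma in_bracket_shift_rim r : r < size s ->
  in_bracket ((\sum_(i < r) nth 0 (lenvec (coim n a)) i - r%:Z)%R
                :: drop r (lenvec (coim n a)))
             (0%R :: [seq (x - r%:Z)%R | x <- drop r (rim n a)]) <->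
  r.+1 < nth 0 s r /\ forall m, r <= m < size s -> nth 0 s m <= fibre_sum m + 1.
Proof.
move=> lt_r; have k_gt0 : 0 < size s := leq_ltn_trans (leq0n r) lt_r.
rewrite in_bracket_shift ?size_rim ?size_lenvec_coim ?prednK //; last exact: rim_incr.
rewrite nth_rim //; split=> [[lt_ry bounds] | [lt_sr bounds]].
  by split=> [|m m_range]; [lia | rewrite -rim_leq_sum_lenvec ?bounds //; lia].
by split=> [|m m_range]; [lia | rewrite rim_leq_sum_lenvec ?bounds //; lia].
Qed.

End ParkingFunctions.

Theorem lemma4p8 (n : nat) (A : seq {fset nat}) (a : nat -> nat) :
  0 < n ->
  ordered_partition n A ->
  (forall j, 1 <= j <= n -> 1 <= a j <= n) ->
  coim n a = A ->
  (parking n a <-> in_bracket (lenvec A) (rim n a)) /\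
  (forall r : nat, r < size A ->
     (parking n a /\ run n a = r) <->
     exists xs : seq int,
       size xs = size A - r /\
       rim n a = [seq (i%:Z)%R | i <- iota 0 r] ++ xs /\
       in_bracket
         ((\sum_(i < r) nth 0%R (lenvec A) i - r%:Z)%R :: drop r (lenvec A))
         (0%R :: [seq (x - r%:Z)%R | x <- xs])).
Proof.
move=> n_gt0 _ a_range <-.
split; first exact: parking_in_bracket.
move=> r; rewrite size_coim => lt_r.
have size_iota0 : size [seq (i%:Z)%R | i <- iota 0 r] = r by rewrite size_map size_iota.
rewrite (parking_run a_range lt_r) (cat_exists_take_drop _ (size_rim n a) size_iota0).
rewrite take_rim_iota.
exact: and_iff_compat_l (iff_sym (in_bracket_shift_rim lt_r)).
Qed.
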